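(* Let $(\mathcal{S},\mathcal{A},\tau,\mu_0,\gamma)$ be fixed and let $\beta>0$. For reward functions $R,R'$, let $Q^{H}_{\beta,R}$ and $Q^{H}_{\beta,R'}$ be the corresponding soft $Q$-functions. Then $Q^{H}_{\beta,R}=Q^{H}_{\beta,R'}$ if and only if $R'$ is produced from $R$ by $S'$-redistribution.
   Context: An MDP is a tuple $(\mathcal{S},\mathcal{A},\tau,\mu_0,R,\gamma)$ with finite $\mathcal{S}$, $\mathcal{A}$, transition dynamics $\tau:\mathcal{S}\times\mathcal{A}\to\Delta(\mathcal{S})$, initial distribution $\mu_0$, deterministic reward $R:\mathcal{S}\times\mathcal{A}\times\mathcal{S}\to\mathbb{R}$, and $\gamma\in(0,1)$. For inverse temperature $\beta>0$, the soft $Q$-function $Q^H_\beta$ is the unique function $\mathcal{S}\times\mathcal{A}\to\mathbb{R}$ satisfying $Q^H_\beta(s,a)=\mathbb{E}_{S'\sim\tau(s,a)}\big[R(s,a,S')+\gamma\frac{1}{\beta}\log\sum_{a'\in\mathcal{A}}\exp(\beta Q^H_\beta(S',a'))\big]$ for all $s,a$. Given $\tau$, $R'$ is produced from $R$ by $S'$-redistribution if $\mathbb{E}_{S'\sim\tau(s,a)}[R(s,a,S')]=\mathbb{E}_{S'\sim\tau(s,a)}[R'(s,a,S')]$ for all $s,a$. *)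

From HB Require Import structures.
From mathcomp Require Import all_boot all_order all_algebra.
From mathcomp Require Import all_classical all_reals all_analysis.
Set Implicit Arguments. Unset Strict Implicit. Unset Printing Implicit Defensive.
Import Order.TTheory GRing.Theory Num.Theory.
Local Open Scope ring_scope.

Section MDP.
Context {R : realType} {S A : finType}.

Definition is_dist (p : S -> R) : Prop :=
  (forall s, 0 <= p s) /\ \sum_(s : S) p s = 1.

(* Soft Bellman equation: Q is the soft Q-function Q^H_beta for reward r,
   i.e. Q(s,a) = E_{S' ~ tau(s,a)} [ r(s,a,S') + gamma * (1/beta) log sum_a' exp(beta Q(S',a')) ]. *)
Definition is_soft_Q (tau : S -> A -> S -> R) (r : S -> A -> S -> R)
    (gamma beta : R) (Q : S -> A -> R) : Prop :=
  forall s a,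
    Q s a = \sum_(s' : S) tau s a s' *
              (r s a s' + gamma * (beta^-1 * ln (\sum_(a' : A) expR (beta * Q s' a')))).

Definition S'_redistribution (tau : S -> A -> S -> R) (r r' : S -> A -> S -> R) : Prop :=
  forall s a, \sum_(s' : S) tau s a s' * r s a s' = \sum_(s' : S) tau s a s' * r' s a s'.

End MDP.

From HB Require Import structures.
From mathcomp Require Import all_boot all_order all_algebra.
From mathcomp Require Import all_classical all_reals all_analysis.
From mathcomp Require Import ring lra.
Set Implicit Arguments. Unset Strict Implicit. Unset Printing Implicit Defensive.
Import Order.TTheory GRing.Theory Num.Theory.
Local Open Scope ring_scope.

(* The soft Bellman operator is a gamma-contraction for the sup norm, because
   the log-sum-exp value is 1-Lipschitz and averaging against tau(s,a) does
   not increase the sup norm.  Subtracting the two Bellman equations, the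
   expected rewards cancel exactly under S'-redistribution, so |Q - Q'| is
   bounded by gamma times its own maximum, hence vanishes. *)

Section SoftValue.
Variables (R : realType) (A : finType).

Definition soft_value (beta : R) (q : A -> R) : R :=
  beta^-1 * ln (\sum_(a : A) expR (beta * q a)).

Lemma soft_value_le_add (beta M : R) (f g : A -> R) :
  0 < beta -> 0 <= M -> (forall a, g a <= f a + M) ->
  soft_value beta g <= soft_value beta f + M.
Proof.
move=> beta_gt0 M_ge0 le_gf; rewrite /soft_value.
have [a0 _|A0] := pickP (@predT A); last first.
  have sum0 (h : A -> R) : \sum_(a : A) expR (beta * h a) = 0.
    by apply: big1 => a _; have := A0 a.
  by rewrite !sum0 ln0 // mulr0 add0r.
have sum_gt0 (h : A -> R) : 0 < \sum_(a : A) expR (beta * h a).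
  rewrite (bigD1 a0) //= ltr_pwDl ?expR_gt0 //.
  by apply: sumr_ge0 => a _; apply/ltW/expR_gt0.
have le_sum : \sum_(a : A) expR (beta * g a)
    <= expR (beta * M) * \sum_(a : A) expR (beta * f a).
  rewrite mulr_sumr; apply: ler_sum => a _.
  by rewrite -expRD ler_expR -mulrDr ler_pM2l // addrC.
have le_ln : ln (\sum_(a : A) expR (beta * g a))
    <= beta * M + ln (\sum_(a : A) expR (beta * f a)).
  rewrite -[beta * M]expRK -lnM ?posrE ?expR_gt0 ?sum_gt0 //.
  by rewrite ler_ln ?posrE ?mulr_gt0 ?expR_gt0 ?sum_gt0.
apply: (le_trans (ler_wpM2l _ le_ln)); first by rewrite invr_ge0 ltW.
by rewrite mulrDr mulrA mulVf ?gt_eqF // mul1r addrC.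
Qed.

Lemma soft_value_lipschitz (beta M : R) (f g : A -> R) :
  0 < beta -> 0 <= M -> (forall a, `|f a - g a| <= M) ->
  `|soft_value beta f - soft_value beta g| <= M.
Proof.
move=> beta_gt0 M_ge0 fgM.
have le_fg : soft_value beta f <= soft_value beta g + M.
  apply: soft_value_le_add => // a.
  by have := fgM a; rewrite ler_norml => /andP[_ ?]; lra.
have le_gf : soft_value beta g <= soft_value beta f + M.
  apply: soft_value_le_add => // a.
  by have := fgM a; rewrite ler_norml => /andP[? _]; lra.
by rewrite ler_norml; apply/andP; split; lra.
Qed.

End SoftValue.

Lemma dist_sum_norm_le (R : realType) (S : finType) (p f : S -> R) (M : R) :
  is_dist p -> (forall s, `|f s| <= M) -> `|\sum_(s : S) p s * f s| <= M.
Proof.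
move=> [p_ge0 p_sum1] fM.
apply: (le_trans (ler_norm_sum _ _ _)).
apply: (@le_trans _ _ (\sum_(s : S) p s * M)).
  by apply: ler_sum => s _; rewrite normrM ger0_norm // ler_wpM2l.
by rewrite -mulr_suml p_sum1 mul1r.
Qed.

Lemma eq0_of_contraction (R : realDomainType) (T : finType) (f : T -> R) (gamma : R) :
  0 <= gamma < 1 ->
  (forall c, 0 <= c -> (forall t, `|f t| <= c) -> forall t, `|f t| <= gamma * c) ->
  f = 0.
Proof.
case/andP=> gamma_ge0 gamma_lt1 contract.
pose M := \big[Num.max/0]_(t : T) `|f t|.
have M_ge0 : 0 <= M by apply: (big_ind (fun x => 0 <= x)) => // x y; rewrite le_max => ->.
have fM t : `|f t| <= M by rewrite /M (bigD1 t) //= le_max lexx.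
have M_le c : (forall t, `|f t| <= c) -> 0 <= c -> M <= c.
  move=> fc c_ge0; apply: (big_ind (fun x => x <= c)) => // x y.
  by rewrite ge_max => -> ->.
have M_le_gM : M <= gamma * M.
  by apply: M_le (contract M M_ge0 fM) _; exact: mulr_ge0.
have M0 : M = 0 by nra.
by apply/funext => t; apply/eqP; rewrite -normr_le0 -M0.
Qed.

Section SoftQ.
Variables (R : realType) (S A : finType).
Variables (tau : S -> A -> S -> R) (gamma beta : R).

Lemma soft_QE (r : S -> A -> S -> R) (Q : S -> A -> R) s a :
  is_soft_Q tau r gamma beta Q ->
  Q s a = \sum_(s' : S) tau s a s' * r s a s'
          + gamma * \sum_(s' : S) tau s a s' * soft_value beta (Q s').
Proof.
move=> /(_ s a) ->; rewrite mulr_sumr -big_split /=.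
by apply: eq_bigr => s' _; rewrite /soft_value; ring.
Qed.

Lemma soft_Q_sub (r r' : S -> A -> S -> R) (Q Q' : S -> A -> R) s a :
  is_soft_Q tau r gamma beta Q -> is_soft_Q tau r' gamma beta Q' ->
  S'_redistribution tau r r' ->
  Q s a - Q' s a =
    gamma * \sum_(s' : S) tau s a s' * (soft_value beta (Q s') - soft_value beta (Q' s')).
Proof.
move=> hQ hQ' hred; rewrite (soft_QE s a hQ) (soft_QE s a hQ') hred.
under [X in _ = gamma * X]eq_bigr do rewrite mulrBr.
by rewrite sumrB; ring.
Qed.

End SoftQ.

Theorem theorem3p2 (R : realType) (S A : finType)
    (tau : S -> A -> S -> R) (mu0 : S -> R) (gamma beta : R)
    (htau : forall s a, is_dist (tau s a)) (hmu0 : is_dist mu0)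
    (hgamma : 0 < gamma < 1) (hbeta : 0 < beta)
    (r r' : S -> A -> S -> R) (Q Q' : S -> A -> R) :
  is_soft_Q tau r gamma beta Q ->
  is_soft_Q tau r' gamma beta Q' ->
  (Q = Q' <-> S'_redistribution tau r r').
Proof.
move=> hQ hQ'; case/andP: hgamma => gamma_gt0 gamma_lt1.
split=> [eqQ s a | hred].
  by have := soft_QE s a hQ; rewrite eqQ (soft_QE s a hQ'); lra.
pose D (p : S * A) := Q p.1 p.2 - Q' p.1 p.2.
have D0 : D = 0.
  apply: (@eq0_of_contraction _ _ _ gamma); first by rewrite ltW ?gamma_lt1.
  move=> c c_ge0 Dc [s a]; rewrite /D /= (soft_Q_sub s a hQ hQ' hred).
  rewrite normrM gtr0_norm // ler_pM2l //.
  apply: dist_sum_norm_le => // s'.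
  by apply: soft_value_lipschitz => // a'; apply: (Dc (s', a')).
apply/funext => s; apply/funext => a; apply/subr0_eq.
exact: (congr1 (fun f => f (s, a)) D0).
Qed.
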